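(* In the setting below, the cokernel $A/\rho(G)$ of $\rho\colon G\to A$ is abelian.
   Context: Let $G$ be a group generated by $a_1,\dots,a_n$ with $z=a_1\cdots a_n$ central. Let $S_1,\dots,S_m\subseteq\{1,\dots,n\}$ with $|S_i\cap S_r|\le1$ for $i\neq r$. For $S\subseteq\{1,\dots,n\}$ let $G_S$ be the quotient of $G$ by the normal closure of $\{a_j:j\notin S\}$; let $a_{ij}$ be the image of $a_j$ in $G_{S_i}$ and $z_i=a_{i1}\cdots a_{in}$ (central in $G_{S_i}$). Assume each $G_{S_i}/\langle z_i\rangle$ is free of rank $|S_i|-1$, the images of any $|S_i|-1$ of the $a_{ij}$, $j\in S_i$, forming a free basis. Let $A=\prod_{i=1}^mG_{S_i}$ and $\rho\colon G\to A$ the product of the projections; $\rho(G)$ is normal in $A$. *)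

From HB Require Import structures.
From mathcomp Require Import all_boot.
Set Implicit Arguments. Unset Strict Implicit. Unset Printing Implicit Defensive.
Local Open Scope group_scope.

Definition is_subgroup (G : groupType) (N : G -> Prop) : Prop :=
  [/\ N 1, (forall x y, N x -> N y -> N (x * y)) & (forall x, N x -> N x^-1)].

Definition is_normal_subgroup (G : groupType) (N : G -> Prop) : Prop :=
  is_subgroup N /\ (forall x g, N x -> N (g^-1 * x * g)).

Definition in_generated (G : groupType) (P : G -> Prop) (g : G) : Prop :=
  forall N : G -> Prop, is_subgroup N -> (forall x, P x -> N x) -> N g.

Definition in_normal_closure (G : groupType) (P : G -> Prop) (g : G) : Prop :=
  forall N : G -> Prop, is_normal_subgroup N -> (forall x, P x -> N x) -> N g.

Definition is_hom (G K : groupType) (f : G -> K) : Prop :=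
  forall x y, f (x * y) = f x * f y.

Definition free_basis (F : groupType) (I : Type) (b : I -> F) : Prop :=
  forall (K : groupType) (f : I -> K),
    exists phi : F -> K,
      [/\ is_hom phi, (forall i, phi (b i) = f i) &
          (forall psi : F -> K, is_hom psi -> (forall i, psi (b i) = f i) ->
             forall x, psi x = phi x)].

From HB Require Import structures.
From mathcomp Require Import all_boot.
Set Implicit Arguments. Unset Strict Implicit. Unset Printing Implicit Defensive.
Local Open Scope group_scope.

(* For each i let N_i be the image in G_{S_i} of the subgroup of G killed by
   every projection rho_r with r <> i; it is normal because rho_i is onto.
   For j <> k at most one index r has both j and k in S_r, so [a_j, a_k] is
   killed by all but possibly one projection, and every commutator of the
   generators of G_{S_i} lies in N_i; as N_i is normal, all commutators of
   G_{S_i} then lie in N_i.  Given x, y in A, choosing for each i an element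
   of G killed off i that maps to [y_i, x_i] and multiplying these elements
   gives g in G with rho(g) = [y, x]. *)

Lemma commgMJ (K : groupType) (x y z : K) : [~ x, y * z] = [~ x, z] * [~ x, y] ^ z.
Proof. by rewrite !commgEl !conjgE !invgM !mulgA mulgK mulgK. Qed.

Lemma commgVJ (K : groupType) (x y : K) : [~ x, y^-1] = [~ x, y]^-1 ^ y^-1.
Proof. by rewrite invgR !commgEl !conjgE !invgK !mulgA mulgV mul1g. Qed.

Section Homomorphisms.
Variables (K L : groupType) (f : K -> L).
Hypothesis f_hom : is_hom f.

Lemma hom1 : f 1 = 1.
Proof. by apply: (mulgI (f 1)); rewrite mulg1 -f_hom mulg1. Qed.

Lemma homV x : f x^-1 = (f x)^-1.
Proof. by apply: (mulgI (f x)); rewrite -f_hom !mulgV hom1. Qed.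

Lemma homJ x y : f (x ^ y) = f x ^ f y.
Proof. by rewrite !conjgE !f_hom homV. Qed.

Lemma homR x y : f [~ x, y] = [~ f x, f y].
Proof. by rewrite !commgEl f_hom homJ homV. Qed.

Lemma in_generated_hom (P : K -> Prop) (P' : L -> Prop) g :
  (forall x, P x -> P' (f x)) -> in_generated P g -> in_generated P' (f g).
Proof.
move=> PP' genP N [N1 NM NV] P'N; apply: (genP (fun x => N (f x))).
- split; first by rewrite hom1.
  + by move=> x y Nx Ny; rewrite f_hom; apply: NM.
  + by move=> x Nx; rewrite homV; apply: NV.
- by move=> x Px; apply/P'N/PP'.
Qed.

Definition hom_image (N : K -> Prop) (h : L) := exists2 k, N k & f k = h.

Lemma is_normal_subgroup_image (N : K -> Prop) :
  (forall h, exists g, f g = h) ->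
  is_normal_subgroup N -> is_normal_subgroup (hom_image N).
Proof.
move=> f_surj [[N1 NM NV] NJ]; split; first split.
- by exists 1; rewrite ?hom1.
- by move=> _ _ [x Nx <-] [y Ny <-]; exists (x * y); rewrite ?f_hom //; apply: NM.
- by move=> _ [x Nx <-]; exists x^-1; rewrite ?homV //; apply: NV.
- move=> _ h [x Nx <-]; have [g <-] := f_surj h.
  by exists (g^-1 * x * g); rewrite ?f_hom ?homV //; apply: NJ.
Qed.

End Homomorphisms.

Section CommutatorsModulo.
Variables (K : groupType) (N : K -> Prop).
Hypothesis N_normal : is_normal_subgroup N.

Lemma normal_conjg x y : N x -> N (x ^ y).
Proof. by move=> Nx; rewrite conjgE mulgA; apply: N_normal.2. Qed.

Lemma commg_mod_sym x y : N [~ x, y] -> N [~ y, x].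
Proof. by have [[_ _ NV] _] := N_normal => /NV; rewrite invgR. Qed.

Lemma is_subgroup_commg_mod x : is_subgroup (fun y => N [~ x, y]).
Proof.
have [[N1 NM NV] _] := N_normal; split.
- by rewrite commg1.
- by move=> y z Ny Nz; rewrite commgMJ; apply: NM => //; apply: normal_conjg.
- by move=> y Ny; rewrite commgVJ; apply/normal_conjg/NV.
Qed.

Lemma commg_mod_generated (P : K -> Prop) :
  (forall g, in_generated P g) -> (forall x y, P x -> P y -> N [~ x, y]) ->
  forall x y, N [~ x, y].
Proof.
move=> genP NP x y; apply/commg_mod_sym.
apply: (genP x _ (is_subgroup_commg_mod y)) => {}x Px.
apply/commg_mod_sym/(genP y _ (is_subgroup_commg_mod x)) => {}y Py.
exact: NP.
Qed.

End CommutatorsModulo.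

Section CokernelOfProjections.
Variables (n m : nat) (G : groupType) (a : 'I_n -> G).
Hypothesis a_gen : forall g : G, in_generated (fun x => exists j, x = a j) g.
Variable S : 'I_m -> {set 'I_n}.
Hypothesis S_inter : forall i r : 'I_m, i != r -> #|S i :&: S r| <= 1.
Variables (H : 'I_m -> groupType) (pi : forall i, G -> H i).
Hypothesis pi_hom : forall i, is_hom (pi i).
Hypothesis pi_surj : forall i (h : H i), exists g, pi i g = h.
Hypothesis pi_a_notin : forall r j, j \notin S r -> pi r (a j) = 1.

Definition ker_others i (k : G) := forall r, r != i -> pi r k = 1.

Lemma ker_others_normal i : is_normal_subgroup (ker_others i).
Proof.
split; first split.
- by move=> r _; rewrite hom1.
- by move=> x y Kx Ky r ri; rewrite pi_hom Kx // Ky // mulg1.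
- by move=> x Kx r ri; rewrite homV // Kx // invg1.
- by move=> x g Kx r ri; rewrite !pi_hom Kx // mulg1 homV // mulVg.
Qed.

Lemma notin_other_S i r j k :
  i != r -> j \in S i -> k \in S i -> j != k -> (j \notin S r) || (k \notin S r).
Proof.
move=> ir jSi kSi jk; rewrite -negb_and; apply/andP => -[jSr kSr].
have jk_sub : [set j; k] \subset S i :&: S r.
  by apply/subsetP => t; rewrite !inE => /orP[]/eqP->; apply/andP.
by have := leq_trans (subset_leq_card jk_sub) (S_inter ir); rewrite cards2 jk.
Qed.

Lemma commg_a_ker_others i j k :
  j \in S i -> k \in S i -> j != k -> ker_others i [~ a j, a k].
Proof.
move=> jSi kSi jk r; rewrite eq_sym => ir; rewrite homR //.
by case/orP: (notin_other_S ir jSi kSi jk) => /pi_a_notin->; rewrite ?comm1g ?commg1.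
Qed.

Lemma commg_image_ker_others i (u v : H i) :
  hom_image (pi i) (ker_others i) [~ u, v].
Proof.
have N_normal := is_normal_subgroup_image (pi_hom i) (@pi_surj i) (ker_others_normal i).
have [[N1 _ _] _] := N_normal.
apply: (commg_mod_generated N_normal (P := fun h => exists j, h = pi i (a j))).
  move=> h; have [g <-] := pi_surj h.
  by apply: (in_generated_hom (pi_hom i) _ (a_gen g)) => _ [j ->]; exists j.
move=> _ _ [j ->] [k ->]; have [<-|jk] := eqVneq j k; first by rewrite commgg.
have [jSi|/pi_a_notin->] := boolP (j \in S i); last by rewrite comm1g.
have [kSi|/pi_a_notin->] := boolP (k \in S i); last by rewrite commg1.
by exists [~ a j, a k]; [apply: commg_a_ker_others | rewrite homR].
Qed.

Lemma lift_image_ker_others (t : forall i, H i) :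
  (forall i, hom_image (pi i) (ker_others i) (t i)) ->
  exists g, forall i, pi i g = t i.
Proof.
move=> tK; suff [g tg] : exists g, forall i, pi i g = if i \in enum 'I_m then t i else 1.
  by exists g => i; rewrite tg mem_enum.
elim: (enum 'I_m) (enum_uniq 'I_m) => [_ | i s IHs /andP[i_notin_s s_uniq]].
  by exists 1 => r; rewrite hom1.
have [g tg] := IHs s_uniq; have [k Kk ki] := tK i.
exists (k * g) => r; rewrite pi_hom tg inE.
have [->|ri] := eqVneq r i; first by rewrite (negbTE i_notin_s) mulg1.
by rewrite Kk ?mul1g.
Qed.

End CokernelOfProjections.

Theorem mainTheorem13
  (n m : nat) (G : groupType) (a : 'I_n -> G)
  (* G is generated by a_1, ..., a_n *)
  (a_gen : forall g : G, in_generated (fun x => exists j, x = a j) g)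
  (* z = a_1 ... a_n is central *)
  (z_central : forall g : G, (\prod_(j < n) a j) * g = g * (\prod_(j < n) a j))
  (S : 'I_m -> {set 'I_n})
  (S_inter : forall i r : 'I_m, i != r -> #|S i :&: S r| <= 1)
  (* G_{S_i}, given as a quotient map pi_i : G ->> H_i with kernel the
     normal closure of {a_j : j \notin S_i} *)
  (H : 'I_m -> groupType) (pi : forall i, G -> H i)
  (pi_hom : forall i, is_hom (pi i))
  (pi_surj : forall i (h : H i), exists g, pi i g = h)
  (pi_ker : forall i g, pi i g = 1 <->
       in_normal_closure (fun x => exists2 j, j \notin S i & x = a j) g)
  (* G_{S_i}/<z_i>, given as a quotient map q_i : H_i ->> Q_i with kernel <z_i>,
     z_i = a_{i1} ... a_{in} *)
  (Q : 'I_m -> groupType) (q : forall i, H i -> Q i)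
  (q_hom : forall i, is_hom (q i))
  (q_surj : forall i (y : Q i), exists h, q i h = y)
  (q_ker : forall i h, q i h = 1 <->
       in_generated (fun x => x = \prod_(j < n) pi i (a j)) h)
  (* G_{S_i}/<z_i> is free of rank |S_i| - 1, any |S_i| - 1 of the images of
     the a_{ij}, j \in S_i, forming a free basis *)
  (S_nonempty : forall i, 0 < #|S i|)
  (free : forall i (j0 : 'I_n), j0 \in S i ->
       free_basis (fun j : {j : 'I_n | (j \in S i) && (j != j0)} =>
                     q i (pi i (a (val j))))) :
  (* A = prod_i G_{S_i}, rho = (pi_i)_i : the cokernel A / rho(G) is abelian,
     i.e. x y and y x lie in the same coset of rho(G) for all x, y in A *)
  forall x y : (forall i : 'I_m, H i),
    exists g : G, forall i : 'I_m, y i * x i = (x i * y i) * pi i g.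
Proof.
move=> x y.
have pi_a_notin r j : j \notin S r -> pi r (a j) = 1.
  by move=> jSr; apply/pi_ker => N _; apply; exists j.
have [g gE] := lift_image_ker_others pi_hom
  (fun i => commg_image_ker_others a_gen S_inter pi_hom pi_surj pi_a_notin (y i) (x i)).
by exists g => i; rewrite gE -commgC.
Qed.
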